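(* Let $V\subseteq B(H)\otimes N$ be a quantum multigraph on a pair $(M,N)$ with $N$ minimally represented on $K$, let $\mathcal{P}_V\in M\otimes M^{op}\otimes N\otimes N^{op}$ be its quantum multi-edge indicator, and let $\tilde V=(\mathrm{id}\otimes\mathrm{tr}_K)(V)\subseteq B(H)$ be the underlying quantum single-edged graph. Define $$\mathcal{S}_V=(\mathrm{id}\otimes\mathrm{id}\otimes\mathrm{tr}_K)(\mathrm{id}\otimes\mathrm{id}\otimes m)(\mathcal{P}_V)\in M\otimes M^{op},$$ where $m:N\otimes N^{op}\to N$, $m(a\otimes b)=ab$, is the multiplication of $N$. Then $\mathcal{S}_V$ is a positive element of $M\otimes M^{op}$, and under the Weaver action of $M\otimes M^{op}$ on $B(H)$ the range of $\pi(\mathcal{S}_V)$ is $\tilde V$.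
   Context: All Hilbert spaces are finite dimensional. $M\subseteq B(H)$, $N\subseteq B(K)$ are finite-dimensional von Neumann algebras; $N$ is minimally represented, meaning $N'=Z(N)$ (commutant equals center). $A^{op}$ denotes the opposite algebra. A quantum multi-relation (multigraph) on $(M,N)$ is a subspace $V\subseteq B(H\otimes K)$ with $V\subseteq B(H)\otimes N$, $V$ an $(M'\otimes1)$–$(M'\otimes1)$ bimodule, and $(1\otimes Z(N))V\subseteq V$. The Weaver action of $M\otimes M^{op}$ on $B(H)$ is $\pi(T_1\otimes T_2)(S)=T_1ST_2$, and that of $M\otimes M^{op}\otimes N\otimes N^{op}$ on $B(H)\otimes B(K)=B(H\otimes K)$ is $\pi(T_1\otimes T_2\otimes T_3\otimes T_4)(S_1\otimes S_2)=T_1S_1T_2\otimes T_3S_2T_4$. $B(H\otimes K)$ carries the Hilbert–Schmidt inner product from $\mathrm{tr}_H\otimes\mathrm{tr}_K$. The quantum multi-edge indicator of $V$ is $\mathcal{P}_V=1-\tilde{\mathcal{P}}_V$, where $\tilde{\mathcal{P}}_V$ is the generator (a projection) of the annihilator ideal $\{\mathcal{B}\in M\otimes M^{op}\otimes N\otimes N^{op}:\pi(\mathcal{B})(T)=0\ \forall T\in V\}$; equivalently $\mathcal{P}_V$ is the projection in $M\otimes M^{op}\otimes N\otimes N^{op}$ such that $\pi(\mathcal{P}_V)$ is the orthogonal projection of $B(H\otimes K)$ onto $V$. $\mathrm{tr}_K$ is the trace on $B(K)$ and $\mathrm{id}\otimes\mathrm{tr}_K$ the partial trace. *)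

(* finite-dimensional operators as complex matrices.
   Complex numbers: R[i] (real_closed's complex) over R : realType. *)
From mathcomp Require Import all_boot all_algebra.
From mathcomp Require Import complex mxtens.
From mathcomp Require Import reals.

Set Implicit Arguments.
Unset Strict Implicit.
Unset Printing Implicit Defensive.

Import GRing.Theory Num.Theory.
Local Open Scope ring_scope.

Section QuantumMultigraphs.
Variable R : realType.
Local Notation C := R[i].

(* index of the basis vector e_i (x) e_p in C^m (x) C^n *)
Definition ix {m n : nat} (i : 'I_m) (p : 'I_n) : 'I_(m * n) := mxtens_index (i, p).

Definition adjmx {m n : nat} (A : 'M[C]_(m, n)) : 'M[C]_(n, m) :=
  (map_mx (@Num.conj _) A)^T.

(* a (finite-dimensional) von Neumann algebra = unital star-subalgebra of B(C^n) *)
Definition is_vNalg {n : nat} (M : 'M[C]_n -> Prop) : Prop :=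
  [/\ M 1%:M,
      (forall a b, M a -> M b -> M (a + b)),
      (forall (c : C) a, M a -> M (c *: a)),
      (forall a b, M a -> M b -> M (a *m b)) &
      (forall a, M a -> M (adjmx a))].

Definition commutant {n : nat} (M : 'M[C]_n -> Prop) (x : 'M[C]_n) : Prop :=
  forall a, M a -> x *m a = a *m x.

Definition center {n : nat} (M : 'M[C]_n -> Prop) (x : 'M[C]_n) : Prop :=
  M x /\ commutant M x.

Definition minimally_represented {n : nat} (N : 'M[C]_n -> Prop) : Prop :=
  forall x, commutant N x <-> center N x.

(* algebraic tensor product P (x) Q realised inside matrices via Kronecker products *)
Definition alg_tens {m n p q : nat} (P : 'M[C]_(m, n) -> Prop) (Q : 'M[C]_(p, q) -> Prop)
  (T : 'M[C]_(m * p, n * q)) : Prop :=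
  exists s : seq ('M[C]_(m, n) * 'M[C]_(p, q)),
    (forall x, x \in s -> P x.1 /\ Q x.2) /\ T = \sum_(x <- s) (x.1 *t x.2).

(* the opposite algebra M^op, realised (star-isomorphically) as the transposed algebra M^T *)
Definition opp_model {n : nat} (M : 'M[C]_n -> Prop) (b : 'M[C]_n) : Prop :=
  exists a, M a /\ b = a^T.

Definition MMop {n : nat} (M : 'M[C]_n -> Prop) : 'M[C]_(n * n) -> Prop :=
  alg_tens M (opp_model M).

Definition is_subspace {m n : nat} (V : 'M[C]_(m, n) -> Prop) : Prop :=
  [/\ V 0, (forall a b, V a -> V b -> V (a + b)) & (forall (c : C) a, V a -> V (c *: a))].

Definition quantum_multigraph {h k : nat} (M : 'M[C]_h -> Prop) (N : 'M[C]_k -> Prop)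
  (V : 'M[C]_(h * k) -> Prop) : Prop :=
  [/\ is_subspace V,
      (forall T, V T -> alg_tens (fun _ => True) N T),
      (forall a b T, commutant M a -> commutant M b -> V T ->
          V ((a *t (1%:M : 'M[C]_k)) *m T *m (b *t (1%:M : 'M[C]_k)))) &
      (forall z T, center N z -> V T -> V (((1%:M : 'M[C]_h) *t z) *m T))].

(* Weaver action of M (x) M^op on B(H): pi(T1 (x) T2^T)(S) = T1 S T2, extended linearly *)
Definition weaver2 {h : nat} (X : 'M[C]_(h * h)) (S : 'M[C]_h) : 'M[C]_h :=
  \matrix_(i, j) \sum_(k0 < h) \sum_(l < h) X (ix i j) (ix k0 l) * S k0 l.

(* Weaver action of M (x) M^op (x) N (x) N^op on B(H (x) K):
   pi(T1 (x) T2^T (x) T3 (x) T4^T)(S1 (x) S2) = T1 S1 T2 (x) T3 S2 T4, extended linearly *)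
Definition weaver4 {h k : nat} (Z : 'M[C]_((h * h) * (k * k))) (S : 'M[C]_(h * k)) :
  'M[C]_(h * k) :=
  \matrix_(x, y)
    \sum_(a < h) \sum_(b < h) \sum_(r < k) \sum_(s < k)
      Z (ix (ix (mxtens_unindex x).1 (mxtens_unindex y).1)
            (ix (mxtens_unindex x).2 (mxtens_unindex y).2))
        (ix (ix a b) (ix r s))
      * S (ix a r) (ix b s).

Definition hs_inner {n : nat} (A B : 'M[C]_n) : C := \tr (adjmx A *m B).

Definition is_orth_proj_onto {n : nat} (V : 'M[C]_n -> Prop) (F : 'M[C]_n -> 'M[C]_n) : Prop :=
  (forall S, V (F S)) /\ (forall S T, V T -> hs_inner (S - F S) T = 0).

Definition multi_edge_indicator {h k : nat} (M : 'M[C]_h -> Prop) (N : 'M[C]_k -> Prop)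
  (V : 'M[C]_(h * k) -> Prop) (P : 'M[C]_((h * h) * (k * k))) : Prop :=
  [/\ alg_tens (MMop M) (MMop N) P, P *m P = P, adjmx P = P &
      is_orth_proj_onto V (weaver4 P)].

(* id (x) f on A (x) B(C^p), for a linear f : B(C^p) -> B(C^q) *)
Definition id_tens {n p q : nat} (f : 'M[C]_p -> 'M[C]_q) (Z : 'M[C]_(n * p)) :
  'M[C]_(n * q) :=
  \matrix_(x, y) f (\matrix_(u, v) Z (ix (mxtens_unindex x).1 u) (ix (mxtens_unindex y).1 v))
                   (mxtens_unindex x).2 (mxtens_unindex y).2.

Definition ptrace {n k : nat} (T : 'M[C]_(n * k)) : 'M[C]_n :=
  \matrix_(i, j) \sum_(p < k) T (ix i p) (ix j p).

(* multiplication m : N (x) N^op -> N, m(c (x) d^T) = c d, extended linearly *)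
Definition multN {k : nat} (Y : 'M[C]_(k * k)) : 'M[C]_k :=
  \matrix_(p, q) \sum_(r < k) Y (ix p q) (ix r r).

Definition S_V {h k : nat} (P : 'M[C]_((h * h) * (k * k))) : 'M[C]_(h * h) :=
  ptrace (id_tens (@multN k) P).

Definition underlying {h k : nat} (V : 'M[C]_(h * k) -> Prop) (S : 'M[C]_h) : Prop :=
  exists T, V T /\ S = ptrace T.

Definition positive_in {n : nat} (A : 'M[C]_n -> Prop) (X : 'M[C]_n) : Prop :=
  exists b, A b /\ X = adjmx b *m b.

End QuantumMultigraphs.

(* In vectorized coordinates, multiplication in N followed by the partial
   trace over K is a fixed real matrix W^T, where W is the matrix of
   S |-> S (x) 1_K.  Since P_V is a self-adjoint idempotent,
   S_V = W^T P_V W = (P_V W)^* (P_V W).  Each W^T (a (x) b) W is a multiple of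
   a, so S_V lies in M (x) M^op, and so does its positive square root, which
   is a polynomial in S_V.  Finally the range of (P_V W)^* (P_V W) is the range
   of (P_V W)^* = W^T P_V, i.e. the partial trace of the range V of P_V. *)

From mathcomp Require Import all_boot all_algebra.
From mathcomp Require Import complex mxtens.
From mathcomp Require Import reals.
From mathcomp Require Import zify.
Set Implicit Arguments.
Unset Strict Implicit.
Unset Printing Implicit Defensive.
Import GRing.Theory Num.Theory.
Local Open Scope ring_scope.
Local Open Scope sesquilinear_scope.

Section GramMatrix.
Variable C : numClosedFieldType.

Lemma trmxC_mul m n p (A : 'M[C]_(m, n)) (B : 'M_(n, p)) :
  (A *m B)^t* = B^t* *m A^t*.
Proof. by rewrite trmx_mul map_mxM. Qed.

Lemma gram_diagE m n (A : 'M[C]_(m, n)) j : (A^t* *m A) j j = \sum_i `|A i j| ^+ 2.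
Proof. by rewrite mxE; apply: eq_bigr => i _; rewrite !mxE normCK mulrC. Qed.

Lemma gram_diag_ge0 m n (A : 'M[C]_(m, n)) j : 0 <= (A^t* *m A) j j.
Proof. by rewrite gram_diagE sumr_ge0 // => i _; rewrite exprn_ge0. Qed.

Lemma mxtrace_gram_eq0 m n (A : 'M[C]_(m, n)) : \tr (A^t* *m A) = 0 -> A = 0.
Proof.
move=> /(psumr_eq0P (fun l _ => gram_diag_ge0 A l)) diag0; apply/matrixP => i j.
have sq_ge0 k : 0 <= `|A k j| ^+ 2 by rewrite exprn_ge0.
move: (diag0 j isT); rewrite gram_diagE => /(psumr_eq0P (fun k _ => sq_ge0 k)).
by move=> /(_ i isT) /eqP; rewrite sqrf_eq0 normr_eq0 mxE => /eqP.
Qed.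

Lemma gram_eq0 m n (A : 'M[C]_(m, n)) : A^t* *m A = 0 -> A = 0.
Proof. by move=> A0; apply: mxtrace_gram_eq0; rewrite A0 mxtrace0. Qed.

(* If [v A^t* A = 0] then [w := v A^t*] satisfies [w w^t* = 0], so [w = 0]:
   the kernels, and hence the ranks, of [A^t* A] and [A^t*] agree. *)
Lemma eqmx_gram m n (A : 'M[C]_(m, n)) : (A^t* *m A :=: A)%MS.
Proof.
have kerG : (kermx (A^t* *m A) <= kermx (A^t*))%MS.
  apply/sub_kermxP; set K := kermx _; rewrite -[K *m _]trmxCK.
  have KG : K *m (A^t* *m A) = 0 by apply/sub_kermxP.
  suff /gram_eq0 -> : (K *m A^t*)^t*^t* *m (K *m A^t*)^t* = 0.
    by rewrite trmx0 map_mx0.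
  by rewrite trmxCK trmxC_mul trmxCK mulmxA -(mulmxA K) KG mul0mx.
apply/eqmxP; rewrite submxMl -(mxrank_leqif_sup (submxMl _ _)).2.
rewrite eqn_leq mxrankS ?submxMl //=.
have := mxrankS kerG; rewrite !mxrank_ker mxrank_map mxrank_tr.
have := rank_leq_row (A^t* *m A); have := rank_leq_col A.
by move: (\rank A) (\rank (A^t* *m A)) => a g; lia.
Qed.

Lemma gram_colspace m n (Y : 'M[C]_(m, n)) (u : 'cV_m) :
  exists v, Y^t* *m Y *m v = Y^t* *m u.
Proof.
(* [eqmx_gram] for the entrywise conjugate of [Y], transposed. *)
set A := Y ^ Num.Def.conjC.
have AtC : A^t* = Y^T by apply/matrixP => i j; rewrite !mxE conjCK.
have /submxP [D E] : (u^T *m A <= A^t* *m A)%MS by rewrite eqmx_gram submxMl.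
have YtCT : (Y^t*)^T = A by apply/matrixP => i j; rewrite !mxE.
by exists D^T; apply: trmx_inj; rewrite !trmx_mul trmxK YtCT E AtC.
Qed.
End GramMatrix.

Lemma poly_interpolation (F : fieldType) (f : F -> F) (s : seq F) :
  exists q : {poly F}, {in s, forall x, q.[x] = f x}.
Proof.
elim: s => [|a s [q qs]]; first by exists 0.
have [as_|as_N] := boolP (a \in s).
  by exists q => x; rewrite inE => /predU1P [->|/qs //]; exact: qs.
pose z := \prod_(y <- s) ('X - y%:P).
have za : z.[a] != 0.
  rewrite horner_prod prodf_seq_neq0; apply/allP => y ys /=.
  by rewrite hornerXsubC subr_eq0; apply: contraNneq as_N => ->.
exists (q + ((f a - q.[a]) / z.[a]) *: z) => x; rewrite inE => /predU1P [->|xs].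
  by rewrite hornerD hornerZ divfK // addrC subrK.
have zx : z.[x] = 0 by rewrite horner_prod (big_rem x xs) /= hornerXsubC subrr mul0r.
by rewrite hornerD hornerZ zx mulr0 addr0 qs.
Qed.

Definition is_unital_subalg (F : fieldType) n (A : 'M[F]_n -> Prop) : Prop :=
  [/\ A 1%:M, (forall a b, A a -> A b -> A (a + b)),
      (forall c a, A a -> A (c *: a)) & (forall a b, A a -> A b -> A (a *m b))].

Lemma subalg0 (F : fieldType) n (A : 'M[F]_n -> Prop) : is_unital_subalg A -> A 0.
Proof. by case=> A1 _ AZ _; rewrite -(scale0r 1%:M); apply: AZ. Qed.

Lemma horner_mx_subalg (F : fieldType) n (A : 'M[F]_n.+1 -> Prop) X p :
  is_unital_subalg A -> A X -> A (horner_mx X p).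
Proof.
move=> subA AX; have [A1 AD AZ AM] := subA.
elim/poly_ind: p => [|p c Ap]; first by rewrite rmorph0; exact: subalg0.
rewrite rmorphD rmorphM /= horner_mx_X horner_mx_C -scalemx1 -mulmxE.
by apply: AD; [apply: AM | apply: AZ].
Qed.

Lemma gram_sqrt_subalg (C : numClosedFieldType) m n (A : 'M[C]_n -> Prop)
    (Y : 'M[C]_(m, n)) :
  is_unital_subalg A -> A (Y^t* *m Y) -> exists2 b, A b & Y^t* *m Y = b^t* *m b.
Proof.
case: n A Y => [|n] A Y subA AX.
  by exists (Y^t* *m Y); rewrite // [LHS]flatmx0 [RHS]flatmx0.
set X := Y^t* *m Y in AX *.
have Xn : X \is normalmx by apply/normalmxP; rewrite /X trmxC_mul trmxCK.
set U := spectralmx X; set d := spectral_diag X.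
have Uu : U \is unitarymx := spectral_unitarymx X.
have UUt : U *m U^t* = 1%:M by apply/unitarymxP.
have XE : X = U^t* *m diag_mx d *m U.
  by rewrite -invmx_unitary //; exact/orthomx_spectralP.
have d_ge0 j : 0 <= d 0 j.
  have : diag_mx d = (Y *m U^t*)^t* *m (Y *m U^t*).
    rewrite trmxC_mul trmxCK !mulmxA -(mulmxA U) -/X XE !mulmxA UUt mul1mx.
    by rewrite -mulmxA UUt mulmx1.
  by move=> /matrixP /(_ j j); rewrite mxE eqxx mulr1n => ->; exact: gram_diag_ge0.
(* The positive square root U^* sqrt(d) U of X is a polynomial in X, hence lies in A. *)
have [q qE] := poly_interpolation sqrtC [seq d 0 j | j <- enum 'I_n.+1].
set S := diag_mx (map_mx sqrtC d).
have SE : S^t* = S.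
  rewrite tr_diag_mx map_diag_mx; congr diag_mx.
  by apply/matrixP => i j; rewrite !mxE ord1; apply: geC0_conj; rewrite sqrtC_ge0.
have SS : S *m S = diag_mx d.
  by rewrite mulmx_diag; congr diag_mx; apply/matrixP => i j; rewrite !mxE ord1 -expr2 sqrtCK.
have bE : horner_mx X q = U^t* *m S *m U.
  rewrite XE -invmx_unitary // horner_mx_uconjC ?unitarymx_unit // horner_mx_diag.
  congr (_ *m diag_mx _ *m _); apply/matrixP => i j; rewrite ord1 !mxE qE //.
  by apply: map_f; exact: mem_enum.
exists (horner_mx X q); first exact: horner_mx_subalg.
rewrite bE !trmxC_mul trmxCK SE !mulmxA -(mulmxA _ U) UUt mulmx1.
by rewrite -(mulmxA (U^t*) S S) SS -XE.
Qed.

Section QuantumMultigraph.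
Variable R : realType.
Local Notation C := R[i].
Local Notation un := mxtens_unindex.

Lemma adjE m n (A : 'M[C]_(m, n)) : adjmx A = A^t*.
Proof. by rewrite /adjmx map_trmx. Qed.

Lemma ixK m n (i : 'I_m) (j : 'I_n) : un (ix i j) = (i, j).
Proof. exact: mxtens_indexK. Qed.

Lemma ixP m n (x : 'I_(m * n)) : exists i j, x = ix i j.
Proof. by case: (mxtens_indexP x) => i j; exists i, j. Qed.

Lemma sum_ix m n (F : 'I_(m * n) -> C) :
  \sum_x F x = \sum_(i < m) \sum_(j < n) F (ix i j).
Proof.
rewrite pair_big /= (reindex (@mxtens_index m n)) /=; last first.
  by exists (@mxtens_unindex m n) => x _; rewrite (mxtens_indexK, mxtens_unindexK).
by apply: eq_bigr => -[i j].
Qed.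

Lemma tensmxZl m n p q c (a : 'M[C]_(m, n)) (b : 'M[C]_(p, q)) :
  (c *: a) *t b = c *: (a *t b).
Proof. by apply/matrixP => x y; rewrite !mxE mulrA. Qed.

Lemma tensmx11 m p : (1%:M : 'M[C]_m) *t (1%:M : 'M[C]_p) = 1%:M.
Proof.
apply/matrixP => x y; case: (mxtens_indexP x) => i j; case: (mxtens_indexP y) => i' j'.
rewrite tensmxE !mxE (inj_eq (can_inj (@mxtens_indexK _ _))) xpair_eqE.
by rewrite -natrM mulnb.
Qed.

Section AlgTens.
Variables (m p : nat) (PP : 'M[C]_m -> Prop) (QQ : 'M[C]_p -> Prop).

Lemma alg_tensD A B : alg_tens PP QQ A -> alg_tens PP QQ B -> alg_tens PP QQ (A + B).
Proof.
move=> [s [Hs ->]] [t [Ht ->]]; exists (s ++ t); split; last by rewrite big_cat.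
by move=> x; rewrite mem_cat => /orP[/Hs|/Ht].
Qed.

Lemma alg_tensZ c A : (forall c a, PP a -> PP (c *: a)) ->
  alg_tens PP QQ A -> alg_tens PP QQ (c *: A).
Proof.
move=> PZ [s [Hs ->]]; exists [seq (c *: x.1, x.2) | x <- s]; split.
  by move=> x /mapP [y /Hs [? ?] ->]; split => //=; apply: PZ.
by rewrite big_map scaler_sumr; apply: eq_bigr => x _; rewrite tensmxZl.
Qed.

Lemma alg_tensM A B :
  (forall a b, PP a -> PP b -> PP (a *m b)) ->
  (forall a b, QQ a -> QQ b -> QQ (a *m b)) ->
  alg_tens PP QQ A -> alg_tens PP QQ B -> alg_tens PP QQ (A *m B).
Proof.
move=> PM QM [s [Hs ->]] [t [Ht ->]].
exists [seq (x.1 *m y.1, x.2 *m y.2) | x <- s, y <- t]; split.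
  move=> z /allpairsP [[x y] [/= /Hs [? ?] /Ht [? ?] ->]] /=.
  by split; [apply: PM | apply: QM].
rewrite big_allpairs_dep /= mulmx_suml; apply: eq_bigr => x _.
by rewrite mulmx_sumr; apply: eq_bigr => y _; exact: tensmx_mul.
Qed.

Lemma alg_tens_subalg :
  is_unital_subalg PP -> is_unital_subalg QQ -> is_unital_subalg (alg_tens PP QQ).
Proof.
move=> [P1 PD PZ PM] [Q1 QD QZ QM]; split.
- by exists [:: (1%:M, 1%:M)]; split; [move=> x /[!inE] /eqP -> | rewrite big_seq1 tensmx11].
- exact: alg_tensD.
- by move=> c A; apply: alg_tensZ.
- by move=> A B; apply: alg_tensM.
Qed.

End AlgTens.

Lemma opp_model_subalg n (M : 'M[C]_n -> Prop) :
  is_unital_subalg M -> is_unital_subalg (opp_model M).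
Proof.
move=> [M1 MD MZ MM]; split.
- by exists 1%:M; rewrite trmx1.
- by move=> _ _ [a [Ma ->]] [b [Mb ->]]; exists (a + b); rewrite linearD; split => //; apply: MD.
- by move=> c _ [a [Ma ->]]; exists (c *: a); rewrite linearZ; split => //; apply: MZ.
- by move=> _ _ [a [Ma ->]] [b [Mb ->]]; exists (b *m a); rewrite trmx_mul; split => //; apply: MM.
Qed.

Lemma MMop_subalg n (M : 'M[C]_n -> Prop) : is_vNalg M -> is_unital_subalg (MMop M).
Proof.
move=> [M1 MD MZ MM _]; have subM : is_unital_subalg M by split.
by apply: alg_tens_subalg => //; apply: opp_model_subalg.
Qed.


Section Vectorization.
Variables h k : nat.

Definition vec2 (S : 'M[C]_h) : 'cV[C]_(h * h) := \matrix_(x, _) S (un x).1 (un x).2.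
Definition unvec2 (v : 'cV[C]_(h * h)) : 'M[C]_h := \matrix_(i, j) v (ix i j) 0.

(* B(H (x) K) is vectorized as vec(B(H)) (x) vec(B(K)), the ordering in which
   the Weaver action of P_V becomes matrix multiplication. *)
Definition vec4 (T : 'M[C]_(h * k)) : 'cV[C]_((h * h) * (k * k)) :=
  \matrix_(x, _) T (ix (un (un x).1).1 (un (un x).2).1) (ix (un (un x).1).2 (un (un x).2).2).
Definition unvec4 (v : 'cV[C]_((h * h) * (k * k))) : 'M[C]_(h * k) :=
  \matrix_(x, y) v (ix (ix (un x).1 (un y).1) (ix (un x).2 (un y).2)) 0.

(* The matrix of S |-> S (x) 1_K on vectorizations; its transpose is the partial trace. *)
Definition amplmx : 'M[C]_((h * h) * (k * k), h * h) :=
  \matrix_(x, j) (((un x).1 == j)%:R * (((un (un x).2).1 == (un (un x).2).2)%:R)).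

Lemma unvec2K : cancel unvec2 vec2.
Proof.
move=> v; apply/matrixP => x z; rewrite ord1; have [i [j ->]] := ixP x.
by rewrite !mxE ixK.
Qed.

Lemma unvec4K : cancel unvec4 vec4.
Proof.
move=> v; apply/matrixP => x z; rewrite ord1; have [a [b ->]] := ixP x.
have [a1 [a2 ->]] := ixP a; have [b1 [b2 ->]] := ixP b.
by rewrite !mxE !ixK.
Qed.

Lemma amplmxE a p q j : amplmx (ix a (ix p q)) j = (a == j)%:R * (p == q)%:R.
Proof. by rewrite !mxE !ixK. Qed.

Lemma amplmx_adj : amplmx^t* = amplmx^T.
Proof. by apply/matrixP => x y; rewrite !mxE rmorphM /= !rmorph_nat. Qed.

Lemma tr_amplmx_mul n (Z : 'M[C]_((h * h) * (k * k), n)) i y :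
  (amplmx^T *m Z) i y = \sum_(p < k) Z (ix i (ix p p)) y.
Proof.
rewrite mxE sum_ix (bigD1 i) //= [X in _ + X]big1 ?addr0; last first.
  move=> a /negPf ai; apply: big1 => b _; have [p [q ->]] := ixP b.
  by rewrite mxE amplmxE ai !mul0r.
rewrite sum_ix; apply: eq_bigr => p _.
rewrite (bigD1 p) //= [X in _ + X]big1 ?addr0; first by rewrite mxE amplmxE !eqxx !mul1r.
by move=> q /negPf qp; rewrite mxE amplmxE eq_sym qp mulr0 mul0r.
Qed.

Lemma mul_amplmx n (Z : 'M[C]_(n, (h * h) * (k * k))) x j :
  (Z *m amplmx) x j = \sum_(p < k) Z x (ix j (ix p p)).
Proof.
rewrite -[Z *m _]trmxK trmx_mul mxE tr_amplmx_mul.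
by apply: eq_bigr => p _; rewrite !mxE.
Qed.

Lemma weaver2E X T : weaver2 X T = unvec2 (X *m vec2 T).
Proof.
apply/matrixP => i j; rewrite !mxE sum_ix; apply: eq_bigr => a _.
by apply: eq_bigr => b _; rewrite !mxE ixK.
Qed.

Lemma weaver4E Z T : vec4 (weaver4 Z T) = Z *m vec4 T.
Proof.
apply/matrixP => x z; rewrite ord1; have [a [b ->]] := ixP x.
have [a1 [a2 ->]] := ixP a; have [b1 [b2 ->]] := ixP b.
rewrite !mxE !ixK /= sum_ix sum_ix; apply: eq_bigr => a' _; apply: eq_bigr => b' _.
by rewrite sum_ix; apply: eq_bigr => r _; apply: eq_bigr => s _; rewrite !mxE !ixK.
Qed.

Lemma ptraceE T : ptrace T = unvec2 (amplmx^T *m vec4 T).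
Proof.
apply/matrixP => i j; rewrite [LHS]mxE [unvec2 _ _ _]mxE tr_amplmx_mul.
by apply: eq_bigr => p _; rewrite !mxE !ixK.
Qed.

Lemma S_VE Z : S_V Z = amplmx^T *m Z *m amplmx.
Proof.
apply/matrixP => i j; rewrite mul_amplmx [LHS]mxE.
under [RHS]eq_bigr do rewrite tr_amplmx_mul.
rewrite exchange_big; apply: eq_bigr => p _.
by rewrite !mxE !ixK /=; apply: eq_bigr => r _; rewrite !mxE.
Qed.

Lemma S_V_tens (a : 'M[C]_(h * h)) (b : 'M[C]_(k * k)) :
  S_V (a *t b) = (\sum_(r < k) \sum_(p < k) b (ix p p) (ix r r)) *: a.
Proof.
apply/matrixP => i j; rewrite S_VE mul_amplmx mxE mulr_suml; apply: eq_bigr => r _.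
by rewrite tr_amplmx_mul mulr_suml; apply: eq_bigr => p _; rewrite /ix tensmxE mulrC.
Qed.

Lemma S_V_alg_tens (A : 'M[C]_(h * h) -> Prop) (B : 'M[C]_(k * k) -> Prop) P :
  is_unital_subalg A -> alg_tens A B P -> A (S_V P).
Proof.
move=> subA [s [Hs ->]]; have [_ AD AZ _] := subA.
rewrite S_VE mulmx_sumr mulmx_suml big_seq.
apply: big_ind => [||x /Hs [Ax _]]; [exact: subalg0 | exact: AD |].
by rewrite -S_VE S_V_tens; apply: AZ.
Qed.

Section Projection.
Variable P : 'M[C]_((h * h) * (k * k)).
Hypotheses (P_idem : P *m P = P) (P_adj : adjmx P = P).

Lemma S_V_gram : S_V P = (P *m amplmx)^t* *m (P *m amplmx).
Proof.
rewrite S_VE trmxC_mul -(adjE P) P_adj amplmx_adj -!mulmxA; congr (_ *m _).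
by rewrite !mulmxA P_idem.
Qed.

Lemma range_ptrace_weaver4 S :
  (exists T, S = ptrace (weaver4 P T)) <-> exists T, S = weaver2 (S_V P) T.
Proof.
have PWadj : (P *m amplmx)^t* = amplmx^T *m P.
  by rewrite trmxC_mul -(adjE P) P_adj amplmx_adj.
split => -[T ->].
  have [v vE] := gram_colspace (P *m amplmx) (vec4 T).
  exists (unvec2 v); rewrite ptraceE weaver4E weaver2E unvec2K S_V_gram vE.
  by rewrite PWadj mulmxA.
exists (unvec4 (amplmx *m vec2 T)).
by rewrite ptraceE weaver4E unvec4K weaver2E S_VE !mulmxA.
Qed.

End Projection.

End Vectorization.

Lemma orth_proj_fixed n (V : 'M[C]_n -> Prop) F T :
  is_orth_proj_onto V F -> V T -> F T = T.
Proof.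
move=> [FV Forth] VT; apply/eqP; rewrite eq_sym -subr_eq0; apply/eqP.
apply: mxtrace_gram_eq0; rewrite -adjE mulmxBr linearB /=.
by move: (Forth T T VT) (Forth T _ (FV T)); rewrite /hs_inner => -> ->; rewrite subrr.
Qed.

Lemma underlying_orth_proj h k (V : 'M[C]_(h * k) -> Prop) F S :
  is_orth_proj_onto V F -> underlying V S <-> exists T, S = ptrace (F T).
Proof.
move=> projF; split => -[T].
  by move=> [VT ->]; exists T; rewrite (orth_proj_fixed projF VT).
by move=> ->; exists (F T); split => //; case: projF.
Qed.

End QuantumMultigraph.

Theorem proposition4p9 (R : realType) (h k : nat)
  (M : 'M[R[i]]_h -> Prop) (N : 'M[R[i]]_k -> Prop)
  (V : 'M[R[i]]_(h * k) -> Prop) (P : 'M[R[i]]_((h * h) * (k * k))) :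
  is_vNalg M -> is_vNalg N -> minimally_represented N ->
  quantum_multigraph M N V ->
  multi_edge_indicator M N V P ->
  positive_in (MMop M) (S_V P) /\
  (forall S, underlying V S <-> exists T, S = weaver2 (S_V P) T).
Proof.
move=> vNM _ _ _ [Ptens P_idem P_adj projP].
split=> [|S]; last by rewrite (underlying_orth_proj _ projP) range_ptrace_weaver4.
have subM := MMop_subalg vNM.
have := S_V_alg_tens subM Ptens; rewrite S_V_gram // => /(gram_sqrt_subalg subM).
by move=> [b Mb ->]; exists b; rewrite adjE.
Qed.
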